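(* There exist $p,k,E$ and source covariance matrices $\Sigma_1,\dots,\Sigma_E$ such that every matrix $V^{\mathrm{seq}}=[v_1,\dots,v_k]$ produced by the sequential procedure $v_1\in\arg\max_{\|v\|=1}\min_{e\in\mathcal{E}}\mathcal{L}_{\mathrm{normVar}}(v;\Sigma_e)$, and for $2\le j\le k$, $v_j\in\arg\max\{\min_{e}\mathcal{L}_{\mathrm{normVar}}([v_1,\dots,v_{j-1},v];\Sigma_e): \|v\|=1,\ v\perp v_i\ \forall i<j\}$, fails to solve rank-$k$ norm-minPCA.
   Context: $\mathcal{O}_{p\times k}=\{V\in\mathbb{R}^{p\times k}:V^\top V=I_k\}$; source domains $\mathcal{E}=\{1,\dots,E\}$ with symmetric positive semidefinite covariances $\Sigma_e$ of positive trace. $\mathcal{L}_{\mathrm{normVar}}(V;\Sigma)=\operatorname{Tr}(V^\top\Sigma V)/\operatorname{Tr}(\Sigma)$. $V^*$ solves rank-$k$ norm-minPCA if $V^*\in\arg\max_{V\in\mathcal{O}_{p\times k}}\min_{e\in\mathcal{E}}\mathcal{L}_{\mathrm{normVar}}(V;\Sigma_e)$. *)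

From HB Require Import structures.
From mathcomp Require Import all_boot all_order all_algebra.
From mathcomp Require Import Rstruct.
Set Implicit Arguments. Unset Strict Implicit. Unset Printing Implicit Defensive.
Import Order.TTheory GRing.Theory Num.Theory.
Local Open Scope ring_scope.

Notation Rl := Rdefinitions.R (only parsing).

Definition orthonormal (p k : nat) (V : 'M[Rl]_(p, k)) : Prop :=
  V^T *m V = 1%:M.

Definition covariance (p : nat) (S : 'M[Rl]_p) : Prop :=
  S^T = S /\ (forall x : 'cV[Rl]_p, 0 <= (x^T *m S *m x) 0 0) /\ 0 < \tr S.

Definition normVar (p k : nat) (V : 'M[Rl]_(p, k)) (S : 'M[Rl]_p) : Rl :=
  \tr (V^T *m S *m V) / \tr S.

Definition minLoss (p k E : nat) (Sigma : 'I_E.+1 -> 'M[Rl]_p)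
  (V : 'M[Rl]_(p, k)) : Rl :=
  \big[Num.min/ normVar V (Sigma ord0)]_(e < E.+1) normVar V (Sigma e).

Definition solves_minPCA (p k E : nat) (Sigma : 'I_E.+1 -> 'M[Rl]_p)
  (V : 'M[Rl]_(p, k)) : Prop :=
  orthonormal V /\
  forall W : 'M[Rl]_(p, k), orthonormal W -> minLoss Sigma W <= minLoss Sigma V.

Definition firstcols (p k j : nat) (hj : (j < k)%N) (V : 'M[Rl]_(p, k)) : 'M[Rl]_(p, j) :=
  colsub (fun i : 'I_j => Ordinal (ltn_trans (ltn_ord i) hj)) V.

(* V = [v_1, ..., v_k] is a possible output of the sequential procedure:
   for every (0-indexed) step j < k, with W = [v_1..v_j] and v = v_{j+1},
   v is a unit vector orthogonal to the columns of W, and maximizes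
   u |-> min_e L([W, u]; Sigma_e) over unit u orthogonal to the columns of W. *)
Definition sequential (p k E : nat) (Sigma : 'I_E.+1 -> 'M[Rl]_p)
  (V : 'M[Rl]_(p, k)) : Prop :=
  forall (j : nat) (hj : (j < k)%N),
    let W := firstcols hj V in
    let v := col (Ordinal hj) V in
    [/\ v^T *m v = 1%:M, W^T *m v = 0 &
     forall u : 'cV[Rl]_p, u^T *m u = 1%:M -> W^T *m u = 0 ->
       minLoss Sigma (row_mx W u) <= minLoss Sigma (row_mx W v)].

From Pilot Require Import Defs.
From mathcomp Require Import all_boot all_order all_algebra.
From mathcomp Require Import Rstruct ring lra.
Import Order.TTheory GRing.Theory Num.Theory.
Local Open Scope ring_scope.

(* Take three domains whose covariances are the coordinate projections
   [e_i e_i^T] of R^3, so that [normVar V Sigma_i] is the squared norm of row i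
   of V.  The first sequential step must pick a balanced vector a with
   a_i^2 = 1/3.  For a unit vector u orthogonal to a, the numbers a_i u_i sum
   to zero, and three numbers summing to zero cannot all have squares above a
   sixth of their total; hence some u_i^2 <= 1/6 and the sequential frame has
   a row of squared norm at most 1/3 + 1/6 = 1/2.  The orthonormal frame with
   rows (1,2)/3, (-2,-1)/3, (2,-2)/3 has all squared row norms at least 5/9. *)

Section ZeroSumTriples.
Context {R : realFieldType}.

Lemma zero_sum3_sqr_ge_same_sign {c w0 w1 w2 : R} :
  0 <= w0 * w1 -> c <= w0 ^+ 2 -> c <= w1 ^+ 2 -> w0 + w1 + w2 = 0 ->
  6 * c <= w0 ^+ 2 + w1 ^+ 2 + w2 ^+ 2.
Proof.
move=> w01_ge0 cw0 cw1 sum0.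
have c_le_w01 : c <= w0 * w1.
  have [c_le0|c_gt0] := lerP c 0; first exact: le_trans w01_ge0.
  have c_nneg : c \in Num.nneg by rewrite nnegrE ltW.
  rewrite -(ler_sqr c_nneg) ?nnegrE // exprMn.
  nra.
have -> : w2 = - (w0 + w1) by lra.
nra.
Qed.

Lemma zero_sum3_sqr_ge {c w0 w1 w2 : R} :
  c <= w0 ^+ 2 -> c <= w1 ^+ 2 -> c <= w2 ^+ 2 -> w0 + w1 + w2 = 0 ->
  6 * c <= w0 ^+ 2 + w1 ^+ 2 + w2 ^+ 2.
Proof.
move=> cw0 cw1 cw2 sum0.
have [w01|w01] := lerP 0 (w0 * w1).
  exact: zero_sum3_sqr_ge_same_sign.
have [w02|w02] := lerP 0 (w0 * w2).
  have := zero_sum3_sqr_ge_same_sign w02 cw0 cw2 (_ : w0 + w2 + w1 = 0); lra.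
have [w12|w12] := lerP 0 (w1 * w2).
  have := zero_sum3_sqr_ge_same_sign w12 cw1 cw2 (_ : w1 + w2 + w0 = 0); lra.
have : 0 <= (w0 * w1) * (w0 * w2) * (w1 * w2).
  by rewrite (_ : _ * _ = (w0 * w1 * w2) ^+ 2) ?sqr_ge0 //; ring.
have : 0 < (w0 * w1) * (w0 * w2) by rewrite nmulr_rgt0.
nra.
Qed.

End ZeroSumTriples.

Lemma orthogonal_balanced3_sqr_le {R : realFieldType} (a u : 'I_3 -> R) c :
  (forall e, a e ^+ 2 = 3^-1) -> \sum_e u e ^+ 2 = 1 -> \sum_e a e * u e = 0 ->
  (forall e, c <= u e ^+ 2) -> c <= 6^-1.
Proof.
move=> a_sqr u_unit au0 c_le.
have w_ge e : c / 3 <= (a e * u e) ^+ 2.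
  by rewrite exprMn a_sqr; have := c_le e; lra.
have w_sum : \sum_e (a e * u e) ^+ 2 = 3^-1.
  by under eq_bigr do rewrite exprMn a_sqr; rewrite -mulr_sumr u_unit mulr1.
move: au0 w_sum; rewrite !big_ord_recr !big_ord0 /= !add0r => au0 w_sum.
have := zero_sum3_sqr_ge (w_ge _) (w_ge _) (w_ge _) au0; lra.
Qed.

Section CoordinateProjections.
Context {R : comNzRingType}.

Lemma mxtrace_delta {p} (i : 'I_p) : \tr (delta_mx i i : 'M[R]_p) = 1.
Proof.
rewrite /mxtrace (bigD1 i) //= big1 ?mxE ?eqxx ?addr0 // => l /negbTE li.
by rewrite mxE li.
Qed.

Lemma mxtrace_delta_conj {p n} (i : 'I_p) (M : 'M[R]_(p, n)) :
  \tr (M^T *m delta_mx i i *m M) = \sum_j M i j ^+ 2.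
Proof.
rewrite -(mul_delta_mx (0 : 'I_1)) -!mulmxA -rowE mulmxA.
rewrite -[delta_mx i 0]trmxK trmx_delta -trmx_mul -rowE mxtrace_mulC.
by rewrite /mxtrace big_ord1 !mxE; apply: eq_bigr => j _; rewrite !mxE expr2.
Qed.

Lemma trmx_mul_cV_00 {p} (x y : 'cV[R]_p) :
  (x^T *m y) 0 0 = \sum_i x i 0 * y i 0.
Proof. by rewrite mxE; apply: eq_bigr => i _; rewrite mxE. Qed.

Lemma sum_row_mx_sqr {p m n} (A : 'M[R]_(p, m)) (B : 'M[R]_(p, n)) i :
  \sum_j row_mx A B i j ^+ 2 = \sum_j A i j ^+ 2 + \sum_j B i j ^+ 2.
Proof.
by rewrite big_split_ord; congr (_ + _); apply: eq_bigr => j _;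
  rewrite ?row_mxEl ?row_mxEr.
Qed.

End CoordinateProjections.

Lemma normVar_delta {p n} (i : 'I_p) (M : 'M[Rl]_(p, n)) :
  normVar M (delta_mx i i) = \sum_j M i j ^+ 2.
Proof. by rewrite /normVar mxtrace_delta_conj mxtrace_delta divr1. Qed.

Lemma covariance_delta {p} (i : 'I_p) : covariance (delta_mx i i : 'M[Rl]_p).
Proof.
split; first by rewrite trmx_delta.
split; last by rewrite mxtrace_delta ltr01.
move=> x; have := mxtrace_delta_conj i x.
by rewrite /mxtrace !big_ord1 => ->; apply: sqr_ge0.
Qed.

Lemma minLoss_le {p k E} (Sigma : 'I_E.+1 -> 'M[Rl]_p) (V : 'M[Rl]_(p, k)) e :
  minLoss Sigma V <= normVar V (Sigma e).
Proof. by rewrite /minLoss (bigD1 e) //= ge_min lexx. Qed.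

Lemma minLoss_ge {p k E} (Sigma : 'I_E.+1 -> 'M[Rl]_p) (V : 'M[Rl]_(p, k)) c :
  (forall e, c <= normVar V (Sigma e)) -> c <= minLoss Sigma V.
Proof.
move=> c_le; apply: (big_ind (fun x => c <= x)) => // x y cx cy.
by rewrite le_min cx cy.
Qed.

Lemma sum_sqr_cV_unit {p} (x : 'cV[Rl]_p) :
  x^T *m x = 1%:M -> \sum_i x i 0 ^+ 2 = 1.
Proof.
move/(congr1 (fun M : 'M_1 => M 0 0)).
rewrite trmx_mul_cV_00 mxE eqxx mulr1n => <-.
by apply: eq_bigr => i _; rewrite expr2.
Qed.

Definition coordCov n : 'I_n.+1 -> 'M[Rl]_n.+1 := fun e => delta_mx e e.

Section FirstColumn.
Context {n k : nat} {V : 'M[Rl]_(n.+1, k.+1)}.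
Hypothesis seqV : sequential (coordCov n) V.

Lemma normVar_coordCov_first_col (W : 'M[Rl]_(n.+1, 0)) (u : 'cV[Rl]_n.+1) e :
  normVar (row_mx W u) (coordCov n e) = u e 0 ^+ 2.
Proof. by rewrite normVar_delta sum_row_mx_sqr big_ord0 add0r big_ord1. Qed.

Lemma sequential_first_col_ge e : n.+1%:R^-1 <= V e ord0 ^+ 2.
Proof.
have [_ _ v_opt] := seqV 0%N (ltn0Sn k).
pose s : Rl := Num.sqrt n.+1%:R^-1.
have s2 : s ^+ 2 = n.+1%:R^-1 by rewrite sqr_sqrtr // invr_ge0.
have u_unit : (const_mx s : 'cV_n.+1)^T *m const_mx s = 1%:M.
  apply/matrixP => i j; rewrite !ord1 trmx_mul_cV_00 mxE /=.
  under eq_bigr do rewrite !mxE -expr2 s2.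
  by rewrite sumr_const card_ord -[LHS]mulr_natr mulVf ?pnatr_eq0.
have := minLoss_le (coordCov n)
  (row_mx (firstcols (ltn0Sn k) V) (col ord0 V)) e.
rewrite normVar_coordCov_first_col mxE; apply: le_trans.
apply: le_trans (v_opt _ u_unit (flatmx0 _)).
by apply: minLoss_ge => e'; rewrite normVar_coordCov_first_col mxE s2.
Qed.

Lemma sequential_first_col e : V e ord0 ^+ 2 = n.+1%:R^-1.
Proof.
have [v_unit _ _] := seqV 0%N (ltn0Sn k).
move/sum_sqr_cV_unit: v_unit; under eq_bigr do rewrite mxE; move=> sum1.
have sum0 : \sum_e (V e ord0 ^+ 2 - n.+1%:R^-1) = 0.
  rewrite sumrB sum1 sumr_const card_ord -[_ *+ _]mulr_natr.
  by rewrite mulVf ?pnatr_eq0 ?subrr.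
apply/eqP; rewrite -subr_eq0; apply/eqP; apply: (psumr_eq0P _ sum0) => // e' _.
by rewrite subr_ge0 sequential_first_col_ge.
Qed.

End FirstColumn.

Definition Vwitness : 'M[Rl]_(3, 2) :=
  \matrix_(i, j)
    (nth [::] [:: [:: 1/3; 2/3]; [:: -2/3; -1/3]; [:: 2/3; -2/3]] i)`_j.

Lemma Vwitness_orthonormal : Defs.orthonormal Vwitness.
Proof.
apply/matrixP => i j; rewrite !mxE !big_ord_recr big_ord0 /= !mxE.
by case: i => [[|[|//]] ?]; case: j => [[|[|//]] ?] /=; lra.
Qed.

Lemma Vwitness_minLoss : 5/9 <= minLoss (coordCov 2%N) Vwitness.
Proof.
apply: minLoss_ge => e; rewrite normVar_delta !big_ord_recr big_ord0 /= !mxE.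
by case: e => [[|[|[|//]]] ?] /=; lra.
Qed.

Lemma sequential_minLoss_le {V : 'M[Rl]_(3, 2)} :
  sequential (coordCov 2%N) V -> minLoss (coordCov 2%N) V <= 2^-1.
Proof.
move=> seqV; have [u_unit Wu0 _] := seqV 1%N (ltnSn 1).
suff: minLoss (coordCov 2%N) V - 3^-1 <= 6^-1 by lra.
apply: (orthogonal_balanced3_sqr_le (fun e => V e ord0) (fun e => V e ord_max)).
- exact: sequential_first_col seqV.
- by move/sum_sqr_cV_unit: u_unit; under eq_bigr do rewrite mxE.
- move/(congr1 (fun M : 'M_1 => M 0 0)): Wu0; rewrite trmx_mul_cV_00 mxE => au0.
  rewrite -[RHS]au0; apply: eq_bigr => e _; rewrite !mxE.
  by congr (V _ _ * _); apply: val_inj.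
- move=> e; rewrite lerBlDl -(sequential_first_col seqV e).
  apply: le_trans (minLoss_le _ _ e) _.
  rewrite normVar_delta !big_ord_recr big_ord0 /= add0r.
  by rewrite (_ : widen_ord _ _ = ord0) //; apply: val_inj.
Qed.

Theorem mainTheorem5 :
  exists (p k E : nat) (Sigma : 'I_E.+1 -> 'M[Rl]_p),
    (0 < k)%N /\ (k <= p)%N /\
    (forall e, covariance (Sigma e)) /\
    forall V : 'M[Rl]_(p, k), sequential Sigma V -> ~ solves_minPCA Sigma V.
Proof.
exists 3%N, 2%N, 2%N, (coordCov 2%N).
split=> //; split=> //; split=> [e|]; first exact: covariance_delta.
move=> V seqV [_ V_opt].
have := le_trans Vwitness_minLoss (V_opt _ Vwitness_orthonormal).
move/le_trans/(_ (sequential_minLoss_le seqV)).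
lra.
Qed.
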